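(* For all integers $n\ge0$, $\overline{bt}(9n+6)\equiv 0\pmod 3$.
   Context: For $|q|<1$ and a positive integer $k$ let $f_k:=\prod_{m=1}^\infty(1-q^{mk})$. The function $\overline{bt}(n)$ is defined by $\sum_{n\ge0}\overline{bt}(n)q^n=\frac{f_4^3}{f_1^6f_2^3}$. *)

From mathcomp Require Import all_boot all_order all_algebra.
Set Implicit Arguments. Unset Strict Implicit. Unset Printing Implicit Defensive.
Import GRing.Theory.
Local Open Scope ring_scope.

(* Truncation of f_k = prod_{m>=1} (1 - q^{mk}) to the factors m <= N.
   For k >= 1 this agrees with f_k in all coefficients of degree <= N. *)
Definition fk (k N : nat) : {poly int} :=
  \prod_(1 <= m < N.+1) (1 - 'X^(m * k)).

(* Truncation of 1/f_k = prod_{m>=1} sum_{j>=0} q^{mkj} (geometric series),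
   keeping m <= N and j <= N; for k >= 1 it agrees with 1/f_k in all
   coefficients of degree <= N. *)
Definition inv_fk (k N : nat) : {poly int} :=
  \prod_(1 <= m < N.+1) \sum_(0 <= j < N.+1) 'X^(m * k * j).

(* bt-bar(n) = coefficient of q^n in f_4^3 / (f_1^6 f_2^3). *)
Definition btbar (n : nat) : int :=
  ((fk 4 n) ^+ 3 * (inv_fk 1 n) ^+ 6 * (inv_fk 2 n) ^+ 3)`_n.

(* Since f_1 = f_2 (q;q^2)_oo, the series equals (f_4 f_1 / f_2)^3 / f_1^9.
   By the Jacobi triple product f_4 (q;q^2)_oo = (q;q^4)_oo (q^3;q^4)_oo (q^4;q^4)_oo
   = sum_(j in Z) (-1)^j q^(j(2j-1)), and modulo 3 cubing is the Frobenius map, so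
   the series is congruent to (sum_j (-1)^j q^(3j(2j-1))) / f_9.  All exponents of
   1/f_9 are multiples of 9 while j(2j-1) is never 2 mod 3, so no exponent 9n+6
   occurs.  Everything is carried out on polynomial truncations, modulo 3 and X^K;
   the triple product comes from Rothe's q-binomial theorem, using that
   (q;q)_k [k+b choose k]_q tends to 1 as b grows. *)

From mathcomp Require Import all_boot all_order all_algebra.
From mathcomp Require Import ring zify.
Import GRing.Theory.
Local Open Scope ring_scope.

Section CongruenceModXn.

Variable d : nat.

Definition eqmodX (K : nat) (p q : {poly int}) :=
  forall i, (i < K)%N -> (d %| (p - q)`_i)%Z.

Variable K : nat.

Lemma eqmodX_refl p : eqmodX K p p.
Proof. by move=> i _; rewrite subrr coef0 dvdz0. Qed.

Lemma eqmodX_sym p q : eqmodX K p q -> eqmodX K q p.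
Proof. by move=> h i /h; rewrite -opprB coefN rpredN. Qed.

Lemma eqmodX_trans q p r : eqmodX K p q -> eqmodX K q r -> eqmodX K p r.
Proof.
move=> hpq hqr i hi; have := rpredD (hpq i hi) (hqr i hi).
by rewrite -coefD addrA subrK.
Qed.

Lemma eqmodXD p q p' q' :
  eqmodX K p q -> eqmodX K p' q' -> eqmodX K (p + p') (q + q').
Proof.
move=> h h' i hi; have := rpredD (h i hi) (h' i hi).
by rewrite -coefD opprD addrACA.
Qed.

Lemma eqmodXMl r p q : eqmodX K p q -> eqmodX K (r * p) (r * q).
Proof.
move=> h i hi; rewrite -mulrBr coefM; apply: rpred_sum => j _.
by apply/dvdz_mull/h; apply: leq_ltn_trans hi; apply: leq_subr.
Qed.

Lemma eqmodXM p q p' q' :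
  eqmodX K p q -> eqmodX K p' q' -> eqmodX K (p * p') (q * q').
Proof.
move=> h h'; apply: (eqmodX_trans (p * q')); first exact: eqmodXMl.
by rewrite (mulrC p) (mulrC q); apply: eqmodXMl.
Qed.

Lemma eqmodXX n p q : eqmodX K p q -> eqmodX K (p ^+ n) (q ^+ n).
Proof.
move=> h; elim: n => [|n IH]; first exact: eqmodX_refl.
by rewrite !exprS; apply: eqmodXM.
Qed.

Lemma eqmodX_sum (I : Type) (r : seq I) (P : pred I) (F G : I -> {poly int}) :
  (forall i, P i -> eqmodX K (F i) (G i)) ->
  eqmodX K (\sum_(i <- r | P i) F i) (\sum_(i <- r | P i) G i).
Proof. by move=> h; apply: big_ind2 => //; [apply: eqmodX_refl | apply: eqmodXD]. Qed.

Lemma eqmodX_prod_nat lo hi (F G : nat -> {poly int}) :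
  (forall m, (lo <= m < hi)%N -> eqmodX K (F m) (G m)) ->
  eqmodX K (\prod_(lo <= m < hi) F m) (\prod_(lo <= m < hi) G m).
Proof.
move=> h; rewrite big_seq [X in eqmodX _ _ X]big_seq.
apply: big_ind2 => [|? ? ? ?|m]; [exact: eqmodX_refl | exact: eqmodXM |].
by rewrite mem_index_iota; apply: h.
Qed.

Lemma eqmodX_addMn p r : eqmodX K (p + r *+ d) p.
Proof.
by move=> i _; rewrite addrAC subrr add0r coefMn -mulr_natr natz dvdz_mull.
Qed.

Lemma eqmodX_mulXn M p q r :
  (K <= M)%N -> p = q + 'X^M * r -> eqmodX K p q.
Proof.
move=> hKM -> i hi; rewrite addrAC subrr add0r coefXnM.
by rewrite (leq_trans hi hKM) dvdz0.
Qed.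

End CongruenceModXn.

Arguments eqmodX_trans {d K} q {p r}.
Arguments eqmodXX {d K} n {p q}.

Section Frobenius.

Variable K : nat.

Lemma eqmodX_cubeD a b : eqmodX 3 K ((a + b) ^+ 3) (a ^+ 3 + b ^+ 3).
Proof.
have -> : (a + b) ^+ 3 = a ^+ 3 + b ^+ 3 + (a ^+ 2 * b + a * b ^+ 2) *+ 3 by ring.
exact: eqmodX_addMn.
Qed.

Lemma eqmodX_cube_sum (I : Type) (r : seq I) (F : I -> {poly int}) :
  eqmodX 3 K ((\sum_(i <- r) F i) ^+ 3) (\sum_(i <- r) F i ^+ 3).
Proof.
elim: r => [|x r IH]; first by rewrite !big_nil expr0n; apply: eqmodX_refl.
rewrite !big_cons; apply: (eqmodX_trans _ (eqmodX_cubeD _ _)).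
exact/eqmodXD/IH/eqmodX_refl.
Qed.

Lemma fk_frobenius k N : eqmodX 3 K (fk k N ^+ 3) (fk (k * 3) N).
Proof.
rewrite /fk -prodrXl; apply: eqmodX_prod_nat => m _.
apply: (eqmodX_trans _ (eqmodX_cubeD _ _)).
have -> : 1 ^+ 3 + (- 'X^(m * k)) ^+ 3 = 1 - 'X^(m * (k * 3)) :> {poly int}.
  by rewrite mulnA [in RHS]exprM; ring.
exact: eqmodX_refl.
Qed.

End Frobenius.

Fixpoint qbinom {R : pzRingType} (q : R) (m k : nat) : R :=
  match m, k with
  | _, 0 => 1
  | 0, _.+1 => 0
  | m'.+1, k'.+1 => q ^+ k'.+1 * qbinom q m' k'.+1 + qbinom q m' k'
  end.

Section GaussianBinomial.

Variable R : comPzRingType.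
Implicit Types q x y : R.

Lemma qbinom_small q m k : (m < k)%N -> qbinom q m k = 0.
Proof.
elim: m k => [|m IH] [|k] //= hk.
by rewrite !IH ?mulr0 ?addr0 // ltnW.
Qed.

Lemma qbinomnn q m : qbinom q m m = 1.
Proof. by elim: m => //= m ->; rewrite qbinom_small // mulr0 add0r. Qed.

Lemma qbinom0 q m : qbinom q m 0 = 1.
Proof. by case: m. Qed.

Lemma qbinomS q m k :
  qbinom q m.+1 k.+1 = q ^+ k.+1 * qbinom q m k.+1 + qbinom q m k.
Proof. by []. Qed.

Local Arguments qbinom : simpl never.

Lemma rothe_qbinomial q x y m :
  \prod_(i < m) (x + y * q ^+ i) =
  \sum_(k < m.+1) qbinom q m k * q ^+ 'C(k, 2) * y ^+ k * x ^+ (m - k).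
Proof.
elim: m y => [|m IH] y.
  by rewrite big_ord0 big_ord_recl big_ord0 /= !expr0 !mulr1 addr0.
rewrite big_ord_recl /= expr0 mulr1.
under eq_bigr do rewrite /bump /= add1n exprS mulrA.
rewrite IH [RHS]big_ord_recl qbinom0 !expr0 !mulr1 mul1r subn0.
under [X in _ = _ + X]eq_bigr do rewrite lift0 subSS qbinomS.
rewrite mulrDl.
have -> : y * (\sum_(k < m.+1) qbinom q m k * q ^+ 'C(k, 2) * (y * q) ^+ k * x ^+ (m - k))
  = \sum_(i < m.+1) qbinom q m i * q ^+ 'C(i.+1, 2) * y ^+ i.+1 * x ^+ (m - i).
  rewrite mulr_sumr; apply: eq_bigr => k _.
  rewrite binS bin1 exprD exprMn exprS; ring.
have -> : x * (\sum_(k < m.+1) qbinom q m k * q ^+ 'C(k, 2) * (y * q) ^+ k * x ^+ (m - k))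
  = x ^+ m.+1 + \sum_(i < m.+1)
      q ^+ i.+1 * qbinom q m i.+1 * q ^+ 'C(i.+1, 2) * y ^+ i.+1 * x ^+ (m - i).
  rewrite [X in _ = _ + X]big_ord_recr /= qbinom_small // mulr0 !mul0r addr0.
  rewrite mulr_sumr big_ord_recl /= qbinom0 !expr0 subn0 !mulr1 mul1r -exprS.
  congr (_ + _); apply: eq_bigr => k _.
  rewrite (_ : bump 0 k = k.+1) // binS bin1 exprD exprMn exprS.
  have -> : (m - k = (m - k.+1).+1)%N by have := ltn_ord k; lia.
  rewrite [x ^+ (_.+1)]exprS; ring.
rewrite -addrA; congr (_ + _).
by rewrite -big_split /=; apply: eq_bigr => k _; rewrite mulrDl; ring.
Qed.

Lemma qpoch_qbinom q a b : exists r,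
  \prod_(1 <= m < a.+1) (1 - q ^+ m) * qbinom q (a + b) a = 1 + q ^+ b.+1 * r.
Proof.
elim: b a => [|b IHb] a.
  rewrite addn0 qbinomnn mulr1.
  elim: a => [|a [r Hr]]; first by exists 0; rewrite big_geq // mulr0 addr0.
  rewrite big_nat_recr //= Hr.
  by exists (r - q ^+ a - q ^+ a.+1 * r); rewrite !exprS; ring.
elim: a => [|a [r1 Hr1]].
  by exists 0; rewrite big_geq // add0n qbinom0 mulr0 addr0 mulr1.
have [r2 Hr2] := IHb a.+1.
rewrite addSn -addnS in Hr2.
rewrite addSn qbinomS mulrDr mulrCA Hr2.
rewrite big_nat_recr //= -mulrA (mulrC (1 - _)) mulrA Hr1.
by exists (q ^+ a * r2 + r1 - q ^+ a.+1 * r1); rewrite !exprS; ring.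
Qed.

End GaussianBinomial.

Section EtaTruncation.

Variable d : nat.

Lemma eqmodX_fk_trunc k N a K : (N <= a)%N -> (K <= N.+1 * k)%N ->
  eqmodX d K (fk k a) (fk k N).
Proof.
move=> hNa hK; rewrite /fk (@big_cat_nat _ _ _ N.+1) //=.
rewrite -[X in eqmodX _ _ _ X]mulr1; apply: eqmodXMl.
apply: (eqmodX_trans (\prod_(N.+1 <= m < a.+1) 1)); last first.
  by rewrite big1_eq; apply: eqmodX_refl.
apply: eqmodX_prod_nat => m /andP [hm _].
apply: (@eqmodX_mulXn _ _ (m * k) _ _ (-1)); last by rewrite mulrN1.
by apply: (leq_trans hK); rewrite leq_mul2r hm orbT.
Qed.

Lemma eqmodX_fk_inv k N K : (0 < k)%N -> (K <= N.+1)%N ->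
  eqmodX d K (fk k N * inv_fk k N) 1.
Proof.
move=> hk hK; rewrite /fk /inv_fk -big_split /=.
apply: (eqmodX_trans (\prod_(1 <= m < N.+1) 1)); last first.
  by rewrite big1_eq; apply: eqmodX_refl.
apply: eqmodX_prod_nat => m /andP [hm _].
have -> : (1 - 'X^(m * k)) * \sum_(0 <= j < N.+1) 'X^(m * k * j)
    = 1 - ('X^(m * k)) ^+ N.+1 :> {poly int}.
  rewrite big_mkord; under eq_bigr do rewrite exprM.
  by rewrite -opprB mulNr -subrX1 opprB.
apply: (@eqmodX_mulXn _ _ (m * k * N.+1) _ _ (-1)); last by rewrite -exprM mulrN1.
by apply: (leq_trans hK); rewrite leq_pmull // muln_gt0 hm.
Qed.

Lemma eqmodX_fk_qbinom s a b N K : (0 < s)%N -> (N <= a)%N ->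
  (K <= N.+1)%N -> (K <= s * b.+1)%N ->
  eqmodX d K (fk s N * qbinom ('X^s) (a + b) a) 1.
Proof.
move=> hs hNa hKN hKb.
apply: (eqmodX_trans (fk s a * qbinom ('X^s) (a + b) a)).
  rewrite !(mulrC _ (qbinom _ _ _)); apply/eqmodX_sym/eqmodXMl.
  by apply: eqmodX_fk_trunc => //; apply: leq_trans hKN _; rewrite leq_pmulr.
have [r Hr] := qpoch_qbinom _ ('X^s : {poly int}) a b.
have -> : fk s a = \prod_(1 <= m < a.+1) (1 - ('X^s : {poly int}) ^+ m).
  by apply: eq_bigr => m _; rewrite -exprM mulnC.
by apply: (@eqmodX_mulXn _ _ (s * b.+1) _ _ r); rewrite // Hr exprM.
Qed.

End EtaTruncation.

Definition poch_odd (L : nat) : {poly int} :=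
  \prod_(i < L) ((1 - 'X^(4 * i + 1)) * (1 - 'X^(4 * i + 3))).

Lemma fk1_odd_even L : fk 1 (4 * L) = poch_odd L * fk 2 (2 * L).
Proof.
rewrite /fk /poch_odd !big_add1 /= (mulnC 4%N) (mulnC 2%N).
rewrite !big_nat_mul big_mkord [in RHS]big_mkord -big_split /=.
apply: eq_bigr => i _; rewrite /index_iota (mulSnr i 4) (mulSnr i 2) !addKn /=.
rewrite !big_cons !big_nil !mulr1 !muln1 (mulnC 4%N i) addn1 addn3.
have -> : ((i * 2).+1 * 2 = (i * 4).+2)%N by lia.
have -> : ((i * 2).+2 * 2 = (i * 4).+4)%N by lia.
ring.
Qed.

Definition theta_exp (L k : nat) : nat :=
  (if L <= k then (k - L) * (2 * (k - L) - 1) else (L - k) * (2 * (L - k) + 1))%N.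

Definition theta_shift (L : nat) : nat := (4 * 'C(L, 2) + (4 * L - 1) * L)%N.

(* [theta L] truncates [sum_(j in Z) (-1)^j q^(j(2j-1))] to [|j| <= L], with
   [j = k - L]; the two branches of [theta_exp] are the cases [j >= 0], [j < 0]. *)
Definition theta (L : nat) : {poly int} :=
  \sum_(k < (2 * L).+1) (-1) ^+ (2 * L - k) * 'X^(theta_exp L k).

Lemma theta_exp_shift L k : (0 < L)%N -> (k <= 2 * L)%N ->
  (4 * 'C(k, 2) + (4 * L - 1) * (2 * L - k) = theta_shift L + theta_exp L k)%N.
Proof.
have bin2E n : (4 * 'C(n, 2) = 2 * (n * (n - 1)))%N.
  elim: n => [|n IH] //; rewrite binS bin1 mulnDr IH.
  by case: n {IH} => [|n] //; rewrite !subSS !subn0; ring.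
move=> hL hk; rewrite /theta_shift /theta_exp !bin2E.
case: (leqP L k) => hLk.
  have [j ?] : exists j, k = (L + j)%N by exists (k - L)%N; lia.
  subst k; have [m ?] : exists m, L = (j + m)%N by exists (L - j)%N; lia.
  subst L.
  rewrite addKn (_ : (2 * (j + m) - (j + m + j) = m)%N); last by lia.
  case: j => [|j] in hL hk hLk *; first by rewrite !add0n !addn0.
  have e1 : (4 * (j.+1 + m) - 1 = 4 * (j + m) + 3)%N by lia.
  have e2 : (j.+1 + m + j.+1 - 1 = j.+1 + m + j)%N by lia.
  have e3 : (j.+1 + m - 1 = j + m)%N by lia.
  have e4 : (2 * j.+1 - 1 = 2 * j + 1)%N by lia.
  by rewrite e1 e2 e3 e4; ring.
have [j ?] : exists j, L = (k + j.+1)%N by exists (L - k.+1)%N; lia.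
subst L.
have e1 : (4 * (k + j.+1) - 1 = 4 * (k + j) + 3)%N by lia.
have e2 : (k + j.+1 - 1 = k + j)%N by lia.
have e3 : (2 * (k + j.+1) - k = k + 2 * j.+1)%N by lia.
rewrite addKn e1 e2 e3.
case: k {hk hLk hL e1 e2 e3} => [|k]; first by ring.
by rewrite subSS subn0; ring.
Qed.

Lemma theta_exp_ge L k : (L - k <= theta_exp L k)%N /\ (k - L <= theta_exp L k)%N.
Proof.
rewrite /theta_exp; case: (leqP L k) => h; split.
- by rewrite (eqP h).
- by case: (k - L)%N => // j; apply: leq_pmulr; lia.
- by case: (L - k)%N => // j; apply: leq_pmulr; lia.
- by rewrite (eqP (ltnW h)).
Qed.

Lemma theta_exp_mod3 L k : (theta_exp L k %% 3 != 2)%N.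
Proof.
apply/eqP => h3; have := divn_eq (theta_exp L k) 3; rewrite h3.
move: (theta_exp L k %/ 3)%N => c.
rewrite /theta_exp; case: (leqP L k) => _; set j := (_ - _)%N;
have [a [r [-> hr]]] : exists a r, j = (3 * a + r)%N /\ (r < 3)%N
  by exists (j %/ 3)%N, (j %% 3)%N; rewrite {1}(divn_eq j 3) mulnC ltn_mod.
all: case: r hr => [|[|[|r]]] // _.
all: try (case: a => [|a]; [lia|]).
all: nia.
Qed.

(* The left side is Rothe's product for [q := 'X^4], [x := - 'X^(4L-1)], [y := 1]. *)
Lemma prod_shifted_poch_odd L :
  \prod_(i < 2 * L) (- 'X^(4 * L - 1) + 1 * ('X^4 : {poly int}) ^+ i)
  = (-1) ^+ L * 'X^(theta_shift L) * poch_odd L.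
Proof.
rewrite (_ : (2 * L = L + L)%N); last by rewrite addnn mul2n.
rewrite big_split_ord /=.
have low : \prod_(i < L) (- 'X^(4 * L - 1) + 1 * ('X^4 : {poly int}) ^+ lshift L i)
    = 'X^(4 * 'C(L, 2)) * \prod_(i < L) (1 - 'X^(4 * i + 3)).
  rewrite [X in _ = _ * X](reindex_inj rev_ord_inj) /=.
  have -> : 'X^(4 * 'C(L, 2)) = \prod_(i < L) ('X^(4 * i) : {poly int}).
    by rewrite prodrXr -big_distrr /= -bin2_sum big_mkord.
  rewrite -big_split /=; apply: eq_bigr => i _.
  rewrite mul1r -exprM mulrBr mulr1 -exprD addrC.
  by have := ltn_ord i => hi; congr (_ - 'X^_); lia.
have high : \prod_(i < L) (- 'X^(4 * L - 1) + 1 * ('X^4 : {poly int}) ^+ rshift L i)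
    = (-1) ^+ L * 'X^((4 * L - 1) * L) * \prod_(i < L) (1 - 'X^(4 * i + 1)).
  have -> : (-1) ^+ L * 'X^((4 * L - 1) * L)
      = \prod_(i < L) (- 'X^(4 * L - 1) : {poly int}).
    by rewrite prodr_const card_ord [RHS]exprNn -exprM.
  rewrite -big_split /=; apply: eq_bigr => i _.
  rewrite mul1r -exprM mulrBr mulr1 mulNr opprK -exprD.
  by have := ltn_ord i => hi; congr (_ + 'X^_); lia.
rewrite low high /theta_shift exprD /poch_odd big_split /=; ring.
Qed.

Lemma poch_odd_qbinom L : (0 < L)%N ->
  (-1) ^+ L * poch_odd L = \sum_(k < (2 * L).+1)
    (-1) ^+ (2 * L - k) * 'X^(theta_exp L k) * qbinom ('X^4) (2 * L) k.
Proof.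
move=> hL; apply: (@mulfI _ ('X^(theta_shift L))); first by rewrite expf_neq0 ?polyX_eq0.
rewrite mulrCA mulrA -prod_shifted_poch_odd rothe_qbinomial mulr_sumr.
apply: eq_bigr => k _.
rewrite expr1n mulr1 (exprNn ('X^(4 * L - 1))) -!exprM.
have hX : 'X^(4 * 'C(k, 2)) * 'X^((4 * L - 1) * (2 * L - k))
    = 'X^(theta_shift L) * 'X^(theta_exp L k) :> {poly int}.
  by rewrite -!exprD theta_exp_shift // -ltnS.
set s := (-1) ^+ _; set c := qbinom _ _ _.
transitivity (s * c * ('X^(4 * 'C(k, 2)) * 'X^((4 * L - 1) * (2 * L - k)))); first ring.
by rewrite hX; ring.
Qed.

Lemma eqmodX_jacobi_triple d N :
  eqmodX d N.+1 (poch_odd (2 * N.+1) * fk 4 N) (theta (2 * N.+1)).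
Proof.
set K := N.+1; set L := (2 * K)%N.
have sgnL : (-1) ^+ L = 1 :> {poly int} by rewrite -signr_odd oddM.
rewrite -[poch_odd L]mul1r -sgnL poch_odd_qbinom // mulr_suml /theta.
apply: eqmodX_sum => k _; rewrite -[_ * fk 4 N]mulrA.
have [hk | hk] := leqP K (theta_exp L k).
  apply: (@eqmodX_mulXn _ _ (theta_exp L k) _ _
    ((-1) ^+ (2 * L - k) * (qbinom ('X^4) (2 * L) k * fk 4 N - 1))) => //; ring.
rewrite -[X in eqmodX _ _ _ X]mulr1; apply: eqmodXMl.
have [g1 g2] := theta_exp_ge L k.
have hkL : (k <= 2 * L)%N by rewrite -ltnS.
rewrite mulrC; have := @eqmodX_fk_qbinom d 4 k (2 * L - k) N K.
by rewrite subnKC //; apply; rewrite /L /K in g1 g2 hk *; lia.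
Qed.

Lemma eqmodX_fk1_poch_odd d N :
  eqmodX d N.+1 (fk 1 N) (poch_odd (2 * N.+1) * fk 2 N).
Proof.
apply: (eqmodX_trans (fk 1 (4 * (2 * N.+1)))).
  by apply/eqmodX_sym/eqmodX_fk_trunc; lia.
by rewrite fk1_odd_even; apply/eqmodXMl/eqmodX_fk_trunc; lia.
Qed.

Definition theta3 (L : nat) : {poly int} :=
  \sum_(k < (2 * L).+1) (-1) ^+ (2 * L - k) * 'X^(theta_exp L k * 3).

Lemma eqmodX_theta_cube K L : eqmodX 3 K (theta L ^+ 3) (theta3 L).
Proof.
rewrite /theta; apply: (eqmodX_trans _ (eqmodX_cube_sum _ _ _ _)); apply: eqmodX_sum => k _.
have sign3 m : ((-1) ^+ m : {poly int}) ^+ 3 = (-1) ^+ m.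
  by rewrite -exprM -[RHS]signr_odd -[LHS]signr_odd oddM andbT.
by rewrite exprMn sign3 -exprM; apply: eqmodX_refl.
Qed.

Lemma eqmodX_btbar_series N :
  eqmodX 3 N.+1 (fk 4 N ^+ 3 * inv_fk 1 N ^+ 6 * inv_fk 2 N ^+ 3)
                (theta3 (2 * N.+1) * inv_fk 9 N).
Proof.
set K := N.+1; set L := (2 * K)%N.
set f1 := fk 1 N; set f2 := fk 2 N; set f4 := fk 4 N.
set g1 := inv_fk 1 N; set g2 := inv_fk 2 N; set g9 := inv_fk 9 N.
set W := f4 ^+ 3 * g1 ^+ 6 * g2 ^+ 3.
have f1_9 : eqmodX 3 K (f1 ^+ 9) (fk 9 N).
  rewrite (exprM f1 3 3); apply: (eqmodX_trans (fk 3 N ^+ 3)).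
    by apply: eqmodXX; apply: fk_frobenius.
  exact: fk_frobenius.
have f1g1 : eqmodX 3 K (f1 * g1) 1 by apply: eqmodX_fk_inv.
have f2g2 : eqmodX 3 K (f2 * g2) 1 by apply: eqmodX_fk_inv.
have f9g9 : eqmodX 3 K (fk 9 N * g9) 1 by apply: eqmodX_fk_inv.
have theta_f4 : eqmodX 3 K (f4 * f1 * g2) (theta L).
  apply: (eqmodX_trans (f4 * poch_odd L * (f2 * g2))).
    have -> : f4 * poch_odd L * (f2 * g2) = f4 * (poch_odd L * f2) * g2 by ring.
    by apply/eqmodXM/eqmodX_refl/eqmodXMl/eqmodX_fk1_poch_odd.
  apply: (eqmodX_trans (f4 * poch_odd L * 1)); first exact/eqmodXMl.
  by rewrite mulr1 mulrC; apply: eqmodX_jacobi_triple.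
apply: (eqmodX_trans (W * (f1 ^+ 9 * g9))).
  apply: (eqmodX_trans (W * (fk 9 N * g9))).
    by rewrite -[X in eqmodX _ _ X _]mulr1; apply/eqmodXMl/eqmodX_sym.
  by apply/eqmodXMl/eqmodXM/eqmodX_refl/eqmodX_sym.
have -> : W * (f1 ^+ 9 * g9) = (f4 * f1 * g2) ^+ 3 * (f1 * g1) ^+ 6 * g9.
  by rewrite /W; ring.
apply: eqmodXM (eqmodX_refl _ _ _) => /=.
rewrite -[X in eqmodX _ _ _ X]mulr1 -(expr1n _ 6).
apply: eqmodXM (eqmodXX 6 f1g1).
exact: (eqmodX_trans _ (eqmodXX 3 theta_f4) (eqmodX_theta_cube _ _)).
Qed.

Definition supp_dvdn (d : nat) (p : {poly int}) :=
  forall i, p`_i != 0 -> (d %| i)%N.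

Section SupportDvdn.

Variable d : nat.

Lemma supp_dvdn_sum (I : Type) (r : seq I) (P : pred I) (F : I -> {poly int}) :
  (forall i, P i -> supp_dvdn d (F i)) -> supp_dvdn d (\sum_(i <- r | P i) F i).
Proof.
move=> hF; apply: big_ind => // [i|p q hp hq i]; first by rewrite coef0 eqxx.
rewrite coefD; have [-> | /hp //] := eqVneq p`_i 0; rewrite add0r; exact: hq.
Qed.

Lemma supp_dvdn_prod (I : Type) (r : seq I) (P : pred I) (F : I -> {poly int}) :
  (forall i, P i -> supp_dvdn d (F i)) -> supp_dvdn d (\prod_(i <- r | P i) F i).
Proof.
move=> hF; apply: big_ind => // [i|p q hp hq i].
  by rewrite coef1; case: (i =P 0)%N => [-> | _]; rewrite ?dvdn0 ?eqxx.
apply: contraNT => hi; rewrite coefM big1 // => j _.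
have [-> | /hp hj] := eqVneq p`_j 0; first by rewrite mul0r.
have [-> | /hq hij] := eqVneq q`_(i - j) 0; first by rewrite mulr0.
by move: (dvdn_add hj hij); rewrite subnKC ?(ltnSE (ltn_ord j)) // (negbTE hi).
Qed.

Lemma supp_dvdn_Xn e : (d %| e)%N -> supp_dvdn d 'X^e.
Proof. by move=> he i; rewrite coefXn; case: (i =P e) => [-> | _]; rewrite ?eqxx. Qed.

End SupportDvdn.

Lemma supp_dvdn_inv_fk k N : supp_dvdn k (inv_fk k N).
Proof.
apply: supp_dvdn_prod => m _; apply: supp_dvdn_sum => j _.
by apply: supp_dvdn_Xn; rewrite dvdn_mulr // dvdn_mull.
Qed.

Lemma coef_theta3_neq0 L i : (theta3 L)`_i != 0 ->
  exists k : 'I_(2 * L).+1, i = (theta_exp L k * 3)%N.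
Proof.
case: (pickP (fun k : 'I_(2 * L).+1 => i == (theta_exp L k * 3)%N)) => [k /eqP | nok].
  by exists k.
rewrite /theta3 coef_sum big1 ?eqxx // => k _.
by rewrite -signr_odd mulr_sign; case: ifP; rewrite ?coefN coefXn nok ?oppr0.
Qed.

Lemma coef_theta3_inv_fk9 L N n : (theta3 L * inv_fk 9 N)`_(9 * n + 6) = 0.
Proof.
rewrite coefM big1 // => j _.
have [-> | /coef_theta3_neq0 [k hk]] := eqVneq (theta3 L)`_j 0; first by rewrite mul0r.
have [-> | /supp_dvdn_inv_fk/dvdnP [c hc]] := eqVneq (inv_fk 9 N)`_(9 * n + 6 - j) 0.
  by rewrite mulr0.
have hj : (j <= 9 * n + 6)%N := ltnSE (ltn_ord j).
by have := theta_exp_mod3 L k; rewrite (_ : theta_exp L k %% 3 = 2)%N //; lia.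
Qed.

Theorem mainTheorem11 : forall n : nat, (3 %| btbar (9 * n + 6))%Z.
Proof.
move=> n; have := eqmodX_btbar_series (9 * n + 6) (9 * n + 6) (ltnSn _).
by rewrite coefB coef_theta3_inv_fk9 subr0.
Qed.
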